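(* Let $p,q\in[1,\infty)$. Without the Objectivity Assumption, the $L(p,q)$-aggregation method is not continuous as a function of the score vectors: there exist data (reviewers, papers, score vectors and recommendations satisfying the standing assumptions) such that, keeping all recommendations fixed, the map sending the score vectors $(\bar x_{ia})_{i,a}$ to the solution vector $(s_a)_{a\in\mathcal P}$ is discontinuous at these score vectors.
   Context: Peer-review setting: a finite set $\mathcal{R}$ of reviewers, a finite set $\mathcal{P}$ of papers, and $d\ge1$ criteria. Every reviewer $i$ reviews every paper $a$, giving a score vector $\bar{x}_{ia}\in[0,10]^d$ and a recommendation $y_{ia}\in[0,10]$. A function $h:[0,10]^d\to[0,10]$ is monotonic if $\bar x\le\bar y$ componentwise implies $h(\bar x)\le h(\bar y)$. Standing assumption: each reviewer $i$ has a monotonic $h_i$ with $y_{ia}=h_i(\bar x_{ia})$ for all $a$. Score vectors of different reviewers for the same paper may differ (no Objectivity Assumption). The $L(p,q)$-aggregation method: (1) ERM step: find a monotonic $\hat h$ minimizing $\big[\sum_{i\in\mathcal{R}}\big(\sum_{a\in\mathcal{P}}|y_{ia}-h(\bar x_{ia})|^p\big)^{q/p}\big]^{1/q}$ over monotonic $h$ (only the values $h(\bar x_{ia})$ matter); among minimizers the value vector $(\hat h(\bar x_{ia}))_{i,a}$ of smallest Euclidean norm is chosen; set $\hat y_{ia}=\hat h(\bar x_{ia})$. (2) Aggregation step: the solution $(s_a)_{a\in\mathcal P}$ minimizes $\big[\sum_{i}\big(\sum_{a}|\hat y_{ia}-s_a|^p\big)^{q/p}\big]^{1/q}$ (ties broken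 by smallest Euclidean norm). *)

From HB Require Import structures.
From mathcomp Require Import all_boot all_order all_algebra.
From mathcomp Require Import all_classical all_reals all_analysis.
From Stdlib Require Import ClassicalEpsilon.
Set Implicit Arguments. Unset Strict Implicit. Unset Printing Implicit Defensive.
Import Order.TTheory GRing.Theory Num.Theory.
Local Open Scope ring_scope.

Section PeerReview.
Variable R : realType.

(* Reviewers are 'I_m, papers 'I_n, criteria 'I_d.
   A score vector in [0,10]^d is a function 'I_d -> R with entries in [0,10]. *)
Definition in010 (v : R) : Prop := 0 <= v <= 10.
Definition in_box (d : nat) (u : 'I_d -> R) : Prop := forall k, in010 (u k).

Definition monotonic (d : nat) (h : ('I_d -> R) -> R) : Prop :=
  (forall u, in_box u -> in010 (h u)) /\
  (forall u v, in_box u -> in_box v -> (forall k, u k <= v k) -> h u <= h v).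

Definition scores_valid (m n d : nat) (x : 'I_m -> 'I_n -> 'I_d -> R) : Prop :=
  forall i a, in_box (x i a).

Definition standing_assumption (m n d : nat)
    (x : 'I_m -> 'I_n -> 'I_d -> R) (y : 'I_m -> 'I_n -> R) : Prop :=
  forall i, exists h, monotonic h /\ forall a, y i a = h (x i a).

Definition Lpq (m n : nat) (p q : R) (r : 'I_m -> 'I_n -> R) : R :=
  (\sum_(i < m) (\sum_(a < n) `|r i a| `^ p) `^ (q / p)) `^ (1 / q).

Definition sqnorm2 (m n : nat) (v : 'I_m -> 'I_n -> R) : R :=
  \sum_(i < m) \sum_(a < n) v i a ^+ 2.

Definition sqnorm1 (n : nat) (s : 'I_n -> R) : R := \sum_(a < n) s a ^+ 2.

Definition achievable (m n d : nat) (x : 'I_m -> 'I_n -> 'I_d -> R)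
    (v : 'I_m -> 'I_n -> R) : Prop :=
  exists h, monotonic h /\ forall i a, v i a = h (x i a).

Definition ERM_min (m n d : nat) (p q : R) (x : 'I_m -> 'I_n -> 'I_d -> R)
    (y v : 'I_m -> 'I_n -> R) : Prop :=
  achievable x v /\
  forall w, achievable x w -> Lpq p q (fun i a => y i a - v i a)
                            <= Lpq p q (fun i a => y i a - w i a).

Definition ERM_out (m n d : nat) (p q : R) (x : 'I_m -> 'I_n -> 'I_d -> R)
    (y yhat : 'I_m -> 'I_n -> R) : Prop :=
  ERM_min p q x y yhat /\
  forall w, ERM_min p q x y w -> sqnorm2 yhat <= sqnorm2 w.

Definition agg_min (m n : nat) (p q : R) (yhat : 'I_m -> 'I_n -> R)
    (s : 'I_n -> R) : Prop :=
  forall t : 'I_n -> R, Lpq p q (fun i a => yhat i a - s a)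
                        <= Lpq p q (fun i a => yhat i a - t a).

Definition agg_out (m n : nat) (p q : R) (yhat : 'I_m -> 'I_n -> R)
    (s : 'I_n -> R) : Prop :=
  agg_min p q yhat s /\ forall t, agg_min p q yhat t -> sqnorm1 s <= sqnorm1 t.

(* The L(p,q)-aggregation method as a function (the outputs of both steps are
   selected by Hilbert's epsilon; they are unique whenever they exist). *)
Definition Lpq_method (m n d : nat) (p q : R) (x : 'I_m -> 'I_n -> 'I_d -> R)
    (y : 'I_m -> 'I_n -> R) : 'I_n -> R :=
  let yhat := epsilon (inhabits (fun (_ : 'I_m) (_ : 'I_n) => (0 : R)))
                      (ERM_out p q x y) in
  epsilon (inhabits (fun (_ : 'I_n) => (0 : R))) (agg_out p q yhat).

End PeerReview.

(* Two reviewers grade two papers on two criteria, and both reject paper 0 and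
   accept paper 1.  In the limit data x, reviewer i gives paper 0 the top score
   10 on criterion i and paper 1 the top score on the other criterion, so the
   two score vectors are swapped between the reviewers.  A single monotonic h
   then fits the mirrored value vectors (A, B) and (B, A); by convexity of the
   power means, the ERM step returns the constant 5 when p > 1 (strict
   convexity makes it the unique minimiser) and the constant 0 when p = 1 (the
   smallest-norm minimiser), so both papers get the same aggregate score.
   Lowering the scores of paper 0 by any e > 0 lets the single rule "accept iff
   some criterion scores 10" fit every recommendation exactly, so the method
   returns the recommendations (0, 10): the score of paper 1 jumps by >= 5. *)

From HB Require Import structures.
From mathcomp Require Import all_boot all_order all_algebra.
From mathcomp Require Import all_classical all_reals all_analysis.
From mathcomp Require Import lra.
From Stdlib Require Import ClassicalEpsilon.
Import Order.TTheory GRing.Theory Num.Theory.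
Local Open Scope ring_scope.

Section power_midpoint.
Context {R : realType}.
Implicit Types (r a b : R).

Lemma powR_MVT r a b : 0 < a -> a < b ->
  exists2 c, a < c < b & b `^ r - a `^ r = r * c `^ (r - 1) * (b - a).
Proof.
move=> a_gt0 ab.
have df x : x \in `]a, b[ -> is_derive x 1 (@powR R ^~ r) (r * x `^ (r - 1)).
  by rewrite in_itv /= => /andP[ax _]; exact: is_derive1_powR (lt_trans a_gt0 ax).
have [|c] := MVT ab df.
  apply: derivable_within_continuous => x; rewrite in_itv /= => /andP[ax _].
  by apply: derivable_powR; rewrite in_itv /= andbT (lt_le_trans a_gt0).
by rewrite in_itv /= => cab ->; exists c.
Qed.

Lemma powR_midpoint_lt r a b : 1 < r -> 0 <= a -> a < b ->
  2 * ((a + b) / 2) `^ r < a `^ r + b `^ r.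
Proof.
move=> r_gt1 a_ge0 ab; have r_gt0 : 0 < r by lra.
have b_gt0 : 0 < b by lra.
(* powR_MVT needs a > 0; for a = 0 the claim is 2^(1 - r) < 1. *)
have [<-|a_neq0] := eqVneq 0 a.
  have half_lt : 2^-1 `^ r < 2^-1 :> R.
    rewrite -[r](subrK 1) powRD ?invr_neq0 ?implybT // powRr1 ?invr_ge0 //.
    rewrite gtr_pMl ?invr_gt0 //.
    have one : 1 `^ (r - 1) = 1 :> R by rewrite powR1.
    rewrite -[X in _ < X]one.
    by apply: gt0_ltr_powR; rewrite ?nnegrE ?invr_ge0 ?invf_lt1 ?ltr1n ?subr_gt0.
  rewrite powR0 ?gt_eqF // !add0r powRM ?invr_ge0 ?ltW //.
  by rewrite mulrCA gtr_pMr ?powR_gt0 //; lra.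
have a_gt0 : 0 < a by rewrite lt_neqAle a_neq0.
set m := (a + b) / 2.
have am : a < m by rewrite /m; lra.
have mb : m < b by rewrite /m; lra.
have [c1 /andP[ac1 c1m] e1] := powR_MVT r _ _ a_gt0 am.
have [c2 /andP[mc2 c2b] e2] := powR_MVT r _ _ (lt_trans a_gt0 am) mb.
(* Both halves have length m - a and t^r grows faster on the right one. *)
have c_lt : c1 `^ (r - 1) < c2 `^ (r - 1).
  by apply: gt0_ltr_powR; rewrite ?nnegrE ?subr_gt0 //; lra.
suff : m `^ r - a `^ r < b `^ r - m `^ r by lra.
have mid : b - m = m - a by rewrite /m; lra.
by rewrite e1 e2 mid ltr_pM2r ?subr_gt0 // ltr_pM2l.
Qed.

Lemma powR_midpoint_le r a b : 1 <= r -> 0 <= a -> 0 <= b ->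
  2 * ((a + b) / 2) `^ r <= a `^ r + b `^ r.
Proof.
rewrite le_eqVlt => /predU1P[<- a_ge0 b_ge0|r_gt1 a_ge0 b_ge0].
  by rewrite !powRr1 //; lra.
have [ab|ba|<-] := ltgtP a b.
- exact/ltW/powR_midpoint_lt.
- by rewrite addrC [leRHS]addrC; exact/ltW/powR_midpoint_lt.
- by rewrite (_ : (a + a) / 2 = a); lra.
Qed.

Lemma gt0_ler_powR r : 0 < r -> {in Num.nneg &, {mono @powR R ^~ r : x y / x <= y}}.
Proof. by move=> r_gt0; apply/le_mono_in/gt0_ltr_powR. Qed.

End power_midpoint.

Section row_loss.
Context {R : realType}.
Implicit Types (p q t u w x y : R).

Definition rowloss p q x y := (x `^ p + y `^ p) `^ (q / p).

Lemma rowloss_ge0 p q x y : 0 <= rowloss p q x y.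
Proof. exact: powR_ge0. Qed.

Lemma rowloss_diag p q t : 0 < p -> 0 <= t -> rowloss p q t t = 2 `^ (q / p) * t `^ q.
Proof.
move=> p_gt0 t_ge0; rewrite /rowloss (_ : _ + _ = 2 * t `^ p); last lra.
by rewrite powRM ?powR_ge0 // -powRrM mulrCA divff ?mulr1 ?gt_eqF.
Qed.

Lemma rowloss_mid_le p q x y : 1 <= p -> 0 < q -> 0 <= x -> 0 <= y ->
  rowloss p q ((x + y) / 2) ((x + y) / 2) <= rowloss p q x y.
Proof.
move=> p_ge1 q_gt0 x_ge0 y_ge0.
apply: ge0_ler_powR; rewrite ?nnegrE ?addr_ge0 ?powR_ge0 ?divr_ge0 //; try lra.
by have := powR_midpoint_le p x y p_ge1 x_ge0 y_ge0; lra.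
Qed.

Lemma rowloss_mid_lt p q x y : 1 < p -> 0 < q -> 0 <= x -> 0 <= y -> x != y ->
  rowloss p q ((x + y) / 2) ((x + y) / 2) < rowloss p q x y.
Proof.
move=> p_gt1 q_gt0 x_ge0 y_ge0 x_neq_y.
apply: gt0_ltr_powR; rewrite ?nnegrE ?addr_ge0 ?powR_ge0 ?divr_gt0 //; try lra.
have [xy|yx] : x < y \/ y < x by move: x_neq_y; case: ltgtP => // _ _; [left|right].
  by have := powR_midpoint_lt p x y p_gt1 x_ge0 xy; lra.
by have := powR_midpoint_lt p y x p_gt1 y_ge0 yx; rewrite addrC; lra.
Qed.

Lemma rowloss_diag_mid_le p q u w : 0 < p -> 1 <= q -> 0 <= u -> 0 <= w ->
  rowloss p q ((u + w) / 2) ((u + w) / 2) *+ 2 <= rowloss p q u u + rowloss p q w w.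
Proof.
move=> p_gt0 q_ge1 u_ge0 w_ge0.
rewrite !rowloss_diag // ?divr_ge0 ?addr_ge0 // -mulrnAr -mulrDr ler_pM2l ?powR_gt0 //.
by rewrite -mulr_natl; exact: powR_midpoint_le.
Qed.

End row_loss.

Section exact_fit.
Context {R : realType} {m n d : nat} {p q : R}.
Hypotheses (p_gt0 : 0 < p) (q_gt0 : 0 < q).

Lemma Lpq_ge0 (r : 'I_m -> 'I_n -> R) : 0 <= Lpq p q r.
Proof. exact: powR_ge0. Qed.

Lemma Lpq_eq0 (r : 'I_m -> 'I_n -> R) : Lpq p q r = 0 <-> forall i a, r i a = 0.
Proof.
have qp_neq0 : q / p != 0 by rewrite gt_eqF // divr_gt0.
split=> [/powR_eq0_eq0/eqP|r0]; last first.
  rewrite /Lpq big1 ?powR0 ?gt_eqF ?divr_gt0 // => i _.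
  by rewrite big1 ?powR0 // => a _; rewrite r0 normr0 powR0 // gt_eqF.
rewrite psumr_eq0 => [/allP r0 i a|i _]; last exact: powR_ge0.
move/implyP: (r0 i (mem_index_enum _)) => /(_ isT) /eqP /powR_eq0_eq0 /eqP.
rewrite psumr_eq0 => [/allP ri0|b _]; last exact: powR_ge0.
move/implyP: (ri0 a (mem_index_enum _)) => /(_ isT) /eqP.
by move=> /powR_eq0_eq0 /normr0_eq0.
Qed.

Lemma Lpq_eq0_le {r r0 : 'I_m -> 'I_n -> R} :
  (forall i a, r0 i a = 0) -> Lpq p q r <= Lpq p q r0 -> forall i a, r i a = 0.
Proof.
move=> /Lpq_eq0 -> r_le0; apply/Lpq_eq0.
by apply/eqP; rewrite eq_le r_le0 Lpq_ge0.
Qed.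

Lemma ERM_out_exact {x : 'I_m -> 'I_n -> 'I_d -> R} {y : 'I_m -> 'I_n -> R}
    (w : 'I_m -> 'I_n -> R) :
  achievable x y -> ERM_out p q x y w <-> w = y.
Proof.
move=> ach_y.
have fit0 i a : y i a - y i a = 0 by rewrite subrr.
have min_y w' : ERM_min p q x y w' -> w' = y.
  move=> [_ /(_ y ach_y) /(Lpq_eq0_le fit0) fit].
  by apply/funext => i; apply/funext => a; apply/esym/eqP; rewrite -subr_eq0 fit.
split=> [[/min_y //]|->]; split=> [|w' /min_y -> //].
by split=> [|w' _]; rewrite ?((Lpq_eq0 _).2 fit0) ?Lpq_ge0.
Qed.

Lemma agg_out_rows {yhat : 'I_m -> 'I_n -> R} {s : 'I_n -> R} (t : 'I_n -> R) : (0 < m)%N ->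
  (forall i a, yhat i a = s a) -> agg_out p q yhat t <-> t = s.
Proof.
move=> m_gt0 rows.
have fit0 i a : yhat i a - s a = 0 by rewrite rows subrr.
have min_s t' : agg_min p q yhat t' -> t' = s.
  move=> /(_ s) /(Lpq_eq0_le fit0) /(_ (Ordinal m_gt0)) fit.
  by apply/funext => a; apply/esym/eqP; rewrite -subr_eq0 -(rows (Ordinal m_gt0)) fit.
split=> [[/min_s //]|->]; split=> [t'|t' /min_s -> //].
by rewrite ((Lpq_eq0 _).2 fit0) Lpq_ge0.
Qed.

Lemma Lpq_method_rows {x : 'I_m -> 'I_n -> 'I_d -> R} {y W : 'I_m -> 'I_n -> R}
    {s : 'I_n -> R} : (0 < m)%N ->
  (forall w, ERM_out p q x y w <-> w = W) -> (forall i a, W i a = s a) ->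
  Lpq_method p q x y = s.
Proof.
move=> m_gt0 ERM_W rows; rewrite /Lpq_method.
set yhat := epsilon _ (ERM_out p q x y).
have -> : yhat = W.
  by apply/ERM_W; apply: epsilon_spec; exists W; exact: (ERM_W W).2.
apply/(agg_out_rows _ m_gt0 rows); apply: epsilon_spec.
by exists s; exact: (agg_out_rows _ m_gt0 rows).2.
Qed.

End exact_fit.

Section achievable.
Context {R : realType} {m n d : nat}.
Implicit Types (x : 'I_m -> 'I_n -> 'I_d -> R) (y : 'I_m -> 'I_n -> R).

Lemma achievable_const x (c : R) : in010 c -> achievable x (fun _ _ => c).
Proof. by move=> c010; exists (fun _ => c). Qed.

Lemma achievable_standing x y : achievable x y -> standing_assumption x y.
Proof. by move=> [h [h_mono fit]] i; exists h. Qed.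

Definition accept_if_top (K : pred 'I_d) (u : 'I_d -> R) : R :=
  if [exists k, K k && (10 <= u k)] then 10 else 0.

Lemma monotonic_accept_if_top (K : pred 'I_d) : monotonic (accept_if_top K).
Proof.
rewrite /accept_if_top; split=> [u _|u v _ _ uv]; first by case: ifP; rewrite /in010; lra.
case: ifP => [/existsP[k /andP[Kk uk]]|_]; last by case: ifP; lra.
by rewrite ifT; [lra | apply/existsP; exists k; rewrite Kk (le_trans uk)].
Qed.

End achievable.

Lemma ord2_cases (i : 'I_2) : i = ord0 \/ i = ord_max.
Proof. by case: i => [[|[|//]] i_lt]; [left|right]; apply: val_inj. Qed.

Lemma sum_ord2 (V : nmodType) (F : 'I_2 -> V) : \sum_(i < 2) F i = F ord0 + F ord_max.
Proof. by rewrite big_ord_recr big_ord1; congr (F _ + _); apply: val_inj. Qed.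

Section counterexample.
Context {R : realType}.
Implicit Types (p q e c A B : R).

Definition ex_scores e : 'I_2 -> 'I_2 -> 'I_2 -> R := fun i a k =>
  if a == ord0 then (if k == i then 10 - e else 0) else (if k == i then 0 else 10).

Definition ex_recs : 'I_2 -> 'I_2 -> R := fun _ a => if a == ord0 then 0 else 10.

Definition mirrored A B : 'I_2 -> 'I_2 -> R := fun i a => if i == a then A else B.

Lemma ex_scores_valid e : 0 <= e <= 10 -> scores_valid (ex_scores e).
Proof. by move=> e010 i a k; rewrite /in010 /ex_scores; do 2!case: ifP; lra. Qed.

Lemma ex_scores_dist e i a k : 0 <= e -> `|ex_scores e i a k - ex_scores 0 i a k| <= e.
Proof.
move=> e_ge0; rewrite /ex_scores; do 2!case: ifP => _; rewrite ?subrr ?normr0 //.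
by rewrite (_ : _ - _ = - e) ?normrN ?ger0_norm //; lra.
Qed.

Lemma ex_scores_perturbed_fit e : 0 < e -> achievable (ex_scores e) ex_recs.
Proof.
move=> e_gt0; exists (accept_if_top predT); split; first exact: monotonic_accept_if_top.
move=> i a; rewrite /accept_if_top /ex_recs /ex_scores.
case: ifP => _; [rewrite ifF | rewrite ifT] => //.
  by apply/negbTE/existsPn => k /=; case: ifP => _; lra.
apply/existsP; exists (if i == ord0 then ord_max else ord0).
by case: (ord2_cases i) => ->; rewrite /= lexx.
Qed.

Lemma ex_scores0_standing : standing_assumption (ex_scores 0) ex_recs.
Proof.
move=> i; exists (accept_if_top (predC1 i)); split; first exact: monotonic_accept_if_top.
move=> a; rewrite /accept_if_top /ex_recs /ex_scores.
case: ifP => _; [rewrite ifF | rewrite ifT] => //.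
  by apply/negbTE/existsPn => k /=; case: eqP => _; lra.
apply/existsP; exists (if i == ord0 then ord_max else ord0).
by case: (ord2_cases i) => ->; rewrite /= lexx.
Qed.

Lemma ex_scores0_mirrored i a :
  ex_scores 0 i a = if i == a then ex_scores 0 ord0 ord0 else ex_scores 0 ord0 ord_max.
Proof.
apply/funext => k; rewrite /ex_scores.
by case: (ord2_cases i) => ->; case: (ord2_cases a) => ->; case: (ord2_cases k) => ->; rewrite /= ?subr0.
Qed.

Lemma achievable_ex_scores0 (v : 'I_2 -> 'I_2 -> R) : achievable (ex_scores 0) v ->
  exists A B, [/\ in010 A, in010 B & v = mirrored A B].
Proof.
move=> [h [[h_box _] fit]].
have box a : in_box (ex_scores 0 ord0 a) by apply: ex_scores_valid; lra.
exists (h (ex_scores 0 ord0 ord0)), (h (ex_scores 0 ord0 ord_max)).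
split; [exact: h_box (box ord0) | exact: h_box (box ord_max) |].
by apply/funext => i; apply/funext => a; rewrite fit ex_scores0_mirrored /mirrored; case: ifP.
Qed.

Definition mirrored_loss p q A B := rowloss p q A (10 - B) + rowloss p q B (10 - A).

Lemma Lpq_mirrored_residual p q A B : in010 A -> in010 B ->
  Lpq p q (fun i a => ex_recs i a - mirrored A B i a) = mirrored_loss p q A B `^ (1 / q).
Proof.
move=> /andP[A_ge0 A_le10] /andP[B_ge0 B_le10].
by rewrite /Lpq !sum_ord2 /ex_recs /mirrored /= !sub0r !normrN !ger0_norm ?subr_ge0.
Qed.

Lemma sqnorm2_mirrored A B : sqnorm2 (mirrored A B) = 2 * (A ^+ 2 + B ^+ 2).
Proof. by rewrite /sqnorm2 !sum_ord2 /mirrored /=; lra. Qed.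

Lemma mirrored_loss_ge0 p q A B : 0 <= mirrored_loss p q A B.
Proof. exact: addr_ge0 (rowloss_ge0 _ _ _ _) (rowloss_ge0 _ _ _ _). Qed.

Lemma mirrored_loss55_le_mid p q A B : 0 < p -> 1 <= q -> in010 A -> in010 B ->
  mirrored_loss p q 5 5 <= rowloss p q ((A + (10 - B)) / 2) ((A + (10 - B)) / 2)
                   + rowloss p q ((B + (10 - A)) / 2) ((B + (10 - A)) / 2).
Proof.
move=> p_gt0 q_ge1 /andP[A_ge0 A_le10] /andP[B_ge0 B_le10].
have u_ge0 : 0 <= (A + (10 - B)) / 2 by lra.
have w_ge0 : 0 <= (B + (10 - A)) / 2 by lra.
have mid : ((A + (10 - B)) / 2 + (B + (10 - A)) / 2) / 2 = 5 by lra.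
have ten5 : 10 - 5 = 5 :> R by lra.
have := rowloss_diag_mid_le p q _ _ p_gt0 q_ge1 u_ge0 w_ge0.
by rewrite mid mulr2n /mirrored_loss ten5.
Qed.

Lemma mirrored_loss_ge p q A B : 1 <= p -> 1 <= q -> in010 A -> in010 B ->
  mirrored_loss p q 5 5 <= mirrored_loss p q A B.
Proof.
move=> p_ge1 q_ge1 A010 B010; have p_gt0 : 0 < p by lra.
apply: le_trans (mirrored_loss55_le_mid _ _ _ _ p_gt0 q_ge1 A010 B010) _.
have q_gt0 : 0 < q by lra.
move: A010 B010 => /andP[A_ge0 A_le10] /andP[B_ge0 B_le10].
by apply: lerD; apply: rowloss_mid_le; rewrite // subr_ge0.
Qed.

Lemma mirrored_loss_gt p q A B : 1 < p -> 1 <= q -> in010 A -> in010 B -> A + B != 10 ->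
  mirrored_loss p q 5 5 < mirrored_loss p q A B.
Proof.
move=> p_gt1 q_ge1 A010 B010 AB; have p_gt0 : 0 < p by lra.
apply: le_lt_trans (mirrored_loss55_le_mid _ _ _ _ p_gt0 q_ge1 A010 B010) _.
have q_gt0 : 0 < q by lra.
move: A010 B010 => /andP[A_ge0 A_le10] /andP[B_ge0 B_le10].
apply: ltr_leD; [apply: rowloss_mid_lt | apply: rowloss_mid_le];
  rewrite ?subr_ge0 //; lra.
Qed.

Lemma mirrored_loss1_const q c : in010 c -> mirrored_loss 1 q c c = mirrored_loss 1 q 5 5.
Proof.
move=> /andP[c_ge0 c_le10].
have ten t : t + (10 - t) = 10 :> R by rewrite addrC subrK.
by rewrite /mirrored_loss /rowloss !powRr1 ?subr_ge0 ?ten //; lra.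
Qed.

Lemma mirrored_const c : mirrored c c = fun _ _ => c.
Proof. by apply/funext => i; apply/funext => a; rewrite /mirrored if_same. Qed.

Lemma achievable_mirrored_const c : in010 c -> achievable (ex_scores 0) (mirrored c c).
Proof. by rewrite mirrored_const; exact: achievable_const. Qed.

Lemma ERM_min_ex_scores0 p q w : 1 <= p -> 1 <= q ->
  ERM_min p q (ex_scores 0) ex_recs w ->
  exists A B, [/\ in010 A, in010 B, w = mirrored A B & mirrored_loss p q A B = mirrored_loss p q 5 5].
Proof.
move=> p_ge1 q_ge1 [/achievable_ex_scores0 [A [B [A010 B010 ->]]] w_min].
have five010 : in010 (5 : R) by apply/andP; split; lra.
have q_inv_gt0 : 0 < 1 / q by rewrite divr_gt0 //; lra.
exists A, B; split; [exact: A010 | exact: B010 | by [] |].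
apply/le_anti/andP; split; last exact: mirrored_loss_ge.
have := w_min _ (achievable_mirrored_const _ five010).
rewrite (Lpq_mirrored_residual _ _ _ _ A010 B010) (Lpq_mirrored_residual _ _ _ _ five010 five010).
by rewrite gt0_ler_powR ?nnegrE ?mirrored_loss_ge0.
Qed.

Lemma ERM_min_ex_scores0_const p q c : 1 <= p -> 1 <= q -> in010 c ->
  mirrored_loss p q c c = mirrored_loss p q 5 5 -> ERM_min p q (ex_scores 0) ex_recs (mirrored c c).
Proof.
move=> p_ge1 q_ge1 c010 c_opt; split; first exact: achievable_mirrored_const.
have q_inv_gt0 : 0 < 1 / q by rewrite divr_gt0 // (lt_le_trans ltr01 q_ge1).
move=> w /achievable_ex_scores0 [A [B [A010 B010 ->]]].
rewrite (Lpq_mirrored_residual _ _ _ _ c010 c010) (Lpq_mirrored_residual _ _ _ _ A010 B010).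
by rewrite gt0_ler_powR ?nnegrE ?mirrored_loss_ge0 ?c_opt; first exact: mirrored_loss_ge.
Qed.

Lemma ERM_out_ex_scores0_p1 q w : 1 <= q ->
  ERM_out 1 q (ex_scores 0) ex_recs w <-> w = mirrored 0 0.
Proof.
move=> q_ge1; have zero010 : in010 (0 : R) by apply/andP; split; lra.
have min0 := ERM_min_ex_scores0_const _ _ _ (lexx 1) q_ge1 zero010 (mirrored_loss1_const _ _ zero010).
have mirr w' : ERM_min 1 q (ex_scores 0) ex_recs w' -> exists A B, w' = mirrored A B.
  by move=> /(ERM_min_ex_scores0 _ _ _ (lexx 1) q_ge1) [A [B [_ _ -> _]]]; exists A, B.
split=> [[/mirr [A [B ->]] /(_ _ min0)]|->].
  rewrite !sqnorm2_mirrored => norm_le.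
  by have [-> ->] : A = 0 /\ B = 0 by split; nra.
split=> // w' /mirr [A [B ->]]; rewrite !sqnorm2_mirrored; nra.
Qed.

Lemma ERM_out_ex_scores0_gt1 p q w : 1 < p -> 1 <= q ->
  ERM_out p q (ex_scores 0) ex_recs w <-> w = mirrored 5 5.
Proof.
move=> p_gt1 q_ge1; have p_ge1 : 1 <= p by lra.
have five010 : in010 (5 : R) by apply/andP; split; lra.
have min5 := ERM_min_ex_scores0_const _ _ _ p_ge1 q_ge1 five010 erefl.
have sum10 w' : ERM_min p q (ex_scores 0) ex_recs w' -> exists A, w' = mirrored A (10 - A).
  move=> /(ERM_min_ex_scores0 _ _ _ p_ge1 q_ge1) [A [B [A010 B010 -> loss_eq]]]; exists A.
  have [AB|AB] := eqVneq (A + B) 10; first by congr mirrored; lra.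
  by have := mirrored_loss_gt _ _ _ _ p_gt1 q_ge1 A010 B010 AB; rewrite loss_eq ltxx.
split=> [[/sum10 [A ->] /(_ _ min5)]|->].
  rewrite !sqnorm2_mirrored => norm_le.
  have -> : A = 5 by nra.
  by congr mirrored; lra.
split=> // w' /sum10 [A ->]; rewrite !sqnorm2_mirrored.
by have := sqr_ge0 (A - 5); nra.
Qed.

Lemma Lpq_method_ex_scores0 p q : 1 <= p -> 1 <= q ->
  exists2 c, c <= 5 & Lpq_method p q (ex_scores 0) ex_recs = fun _ => c.
Proof.
move=> p_ge1 q_ge1; have q_gt0 : 0 < q by lra.
have rows c i a : mirrored c c i a = c by rewrite mirrored_const.
case: (ltgtP p 1) p_ge1 => [|p_gt1 _|-> _]; first lra.
  exists 5; first lra.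
  have ERM5 w := ERM_out_ex_scores0_gt1 _ _ w p_gt1 q_ge1.
  by apply: (Lpq_method_rows (lt_trans ltr01 p_gt1) q_gt0 (ltn0Sn 1) ERM5 (rows 5)).
exists 0; first lra.
have ERM0 w := ERM_out_ex_scores0_p1 _ w q_ge1.
by apply: (Lpq_method_rows ltr01 q_gt0 (ltn0Sn 1) ERM0 (rows 0)).
Qed.

End counterexample.

Theorem theorem4p5 (R : realType) (p q : R) :
  1 <= p -> 1 <= q ->
  exists (m n d : nat) (x : 'I_m -> 'I_n -> 'I_d -> R) (y : 'I_m -> 'I_n -> R),
    [/\ [&& 0 < m, 0 < n & 0 < d]%N,
        scores_valid x,
        standing_assumption x y &
        (* the map x' |-> Lpq_method p q x' y (y fixed) is not continuous at x *)
        (exists2 eps : R, 0 < eps &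
          forall delta : R, 0 < delta ->
            exists x' : 'I_m -> 'I_n -> 'I_d -> R,
              [/\ scores_valid x',
                  standing_assumption x' y,
                  (forall i a k, `|x' i a k - x i a k| < delta) &
                  (exists a, eps <= `|Lpq_method p q x' y a - Lpq_method p q x y a|) ])].
Proof.
move=> p_ge1 q_ge1; have p_gt0 : 0 < p by lra.
have q_gt0 : 0 < q by lra.
have [c c_le5 method0] := Lpq_method_ex_scores0 _ _ p_ge1 q_ge1.
exists 2%N, 2%N, 2%N, (ex_scores 0), ex_recs; split.
- by [].
- by apply: ex_scores_valid; lra.
- exact: ex_scores0_standing.
exists 5 => [|delta delta_gt0]; first lra.
pose e := Num.min (delta / 2) 1.
have e_gt0 : 0 < e by rewrite lt_min; apply/andP; split; lra.
have e_le1 : e <= 1 by rewrite ge_min lexx orbT.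
have e_lt : e < delta by apply: le_lt_trans (_ : delta / 2 < delta); rewrite ?ge_min ?lexx //; lra.
have fit := ex_scores_perturbed_fit _ e_gt0.
exists (ex_scores e); split.
- by apply: ex_scores_valid; lra.
- exact: achievable_standing.
- by move=> i a k; apply: le_lt_trans (ex_scores_dist _ i a k (ltW e_gt0)) e_lt.
- exists ord_max.
  have ERM_e w := ERM_out_exact p_gt0 q_gt0 w fit.
  have rows i a : ex_recs i a = ex_recs ord0 a :> R by [].
  rewrite method0 (Lpq_method_rows p_gt0 q_gt0 (ltn0Sn 1) ERM_e rows) /ex_recs /=.
  by rewrite ger0_norm; lra.
Qed.
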